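(* Let $\beta>0$, $\mu>0$ and $0<p<1$. Consider the system $$S_0'=\mu-\beta S_0A-\mu S_0,\qquad S_1'=(1-p)\beta S_0A-\beta S_1A-\mu S_1,\qquad A'=\beta(pS_0+S_1)A-\mu A$$ on the closed simplex $\Delta=\{(S_0,S_1,A): S_0,S_1,A\ge 0,\ S_0+S_1+A=1\}$. Then every solution starting in $\Delta$ converges, as $t\to\infty$, to an equilibrium point of the system. (Equivalently, for the planar system obtained by substituting $S_1=1-S_0-A$, $$S_0'=\mu-\beta S_0A-\mu S_0,\qquad A'=\beta[1-(1-p)S_0-A]A-\mu A,$$ on the region $S_0\ge0$, $A\ge0$, $S_0+A\le 1$, every trajectory approaches an equilibrium.)
   Context: This is the two-stage contagion model with permanent adoption: $S_0,S_1,A$ are the population fractions of naive, informed and adopter individuals; $\beta$ is the effective contact rate, $\mu$ the per capita demographic turnover rate, and $p$ the probability that a naive individual adopts upon first effective contact with an adopter. The simplex $\Delta$ is forward invariant. *)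

From Stdlib Require Import Reals Lra.
Open Scope R_scope.

Definition f_S0 (beta mu p : R) (s0 s1 a : R) : R := mu - beta * s0 * a - mu * s0.
Definition f_S1 (beta mu p : R) (s0 s1 a : R) : R :=
  (1 - p) * beta * s0 * a - beta * s1 * a - mu * s1.
Definition f_A (beta mu p : R) (s0 s1 a : R) : R := beta * (p * s0 + s1) * a - mu * a.

Definition in_simplex (s0 s1 a : R) : Prop :=
  0 <= s0 /\ 0 <= s1 /\ 0 <= a /\ s0 + s1 + a = 1.

Definition is_equilibrium (beta mu p : R) (s0 s1 a : R) : Prop :=
  f_S0 beta mu p s0 s1 a = 0 /\ f_S1 beta mu p s0 s1 a = 0 /\ f_A beta mu p s0 s1 a = 0.

Definition right_cont_at0 (x : R -> R) : Prop :=
  forall eps, eps > 0 -> exists delta, delta > 0 /\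
    forall t, 0 <= t < delta -> Rabs (x t - x 0) < eps.

Definition is_solution (beta mu p : R) (S0 S1 A : R -> R) : Prop :=
  (forall t, 0 < t ->
     derivable_pt_lim S0 t (f_S0 beta mu p (S0 t) (S1 t) (A t)) /\
     derivable_pt_lim S1 t (f_S1 beta mu p (S0 t) (S1 t) (A t)) /\
     derivable_pt_lim A  t (f_A  beta mu p (S0 t) (S1 t) (A t))) /\
  right_cont_at0 S0 /\ right_cont_at0 S1 /\ right_cont_at0 A.

Definition tends_at_infty (x : R -> R) (l : R) : Prop :=
  forall eps, eps > 0 -> exists T, forall t, t >= T -> Rabs (x t - l) < eps.

From Stdlib Require Import Reals Lra Classical.
From Coquelicot Require Import Coquelicot.
Open Scope R_scope.

(* The simplex is forward invariant: the total population N satisfies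
   N' = mu (1 - N), and every coordinate has a nonnegative derivative
   whenever it vanishes, which a Gronwall estimate on the squared negative
   part turns into invariance.

   Along a solution the velocities u = S0' and v = A' obey the linear system
     u' = -(beta A + mu) u - beta S0 v,
     v' = (beta (p S0 + S1) - mu - beta A) v - beta (1 - p) A u,
   which is cooperative for (u, -v); hence the closed quadrants
   {u >= 0 >= v} and {u <= 0 <= v} are forward invariant.  If the
   trajectory never enters them, u and v never vanish and keep a common
   strict sign.  Either way S0 and A are eventually monotone and bounded,
   so they converge; the vector field at the limit point is then the limit
   of the derivatives of bounded functions, hence vanishes. *)

Definition right_continuous_at (f : R -> R) (t0 : R) : Prop :=
  limit1_in f (fun t => t0 <= t) (f t0) t0.

Lemma right_cont_at0_right_continuous (f : R -> R) :
  right_cont_at0 f -> right_continuous_at f 0.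
Proof.
  intros Hf eps Heps. destruct (Hf eps Heps) as [delta [Hdelta Hclose]].
  exists delta; split; [exact Hdelta|].
  intros t [Ht Hdist]; simpl in *; unfold R_dist in *.
  rewrite Rminus_0_r, Rabs_right in Hdist by lra.
  apply Hclose; lra.
Qed.

Lemma continuity_pt_right_continuous (f : R -> R) (t0 : R) :
  continuity_pt f t0 -> right_continuous_at f t0.
Proof.
  intros Hf eps Heps. destruct (Hf eps Heps) as [delta [Hdelta Hclose]].
  exists delta; split; [exact Hdelta|].
  intros t [_ Hdist]. destruct (Req_dec t t0) as [->|Hne].
  - simpl; unfold R_dist; rewrite Rminus_diag, Rabs_R0; lra.
  - apply Hclose; split; [split; [exact I|congruence]|exact Hdist].
Qed.

Lemma Rmin0_dist (x y : R) : Rabs (Rmin x 0 - Rmin y 0) <= Rabs (x - y).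
Proof.
  unfold Rmin. destruct (Rle_dec x 0), (Rle_dec y 0);
    unfold Rabs; repeat destruct (Rcase_abs _); lra.
Qed.

Lemma limit1_in_Rmin0 (f : R -> R) (D : R -> Prop) (l x0 : R) :
  limit1_in f D l x0 -> limit1_in (fun x => Rmin (f x) 0) D (Rmin l 0) x0.
Proof.
  intros Hf eps Heps. destruct (Hf eps Heps) as [delta [Hdelta Hclose]].
  exists delta; split; [exact Hdelta|].
  intros x Hx. specialize (Hclose x Hx); simpl in *; unfold R_dist in *.
  exact (Rle_lt_trans _ _ _ (Rmin0_dist (f x) l) Hclose).
Qed.

Lemma right_continuous_bounded (f : R -> R) (t0 T : R) :
  right_continuous_at f t0 -> (forall t, t0 < t -> continuity_pt f t) ->
  exists M, forall t, t0 <= t <= T -> Rabs (f t) <= M.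
Proof.
  intros Hrc Hc. destruct (Hrc 1) as [delta [Hdelta Hnear]]; [lra|].
  set (a := t0 + delta / 2). set (b := Rmax T a).
  assert (Hab : a <= b) by apply Rmax_r.
  assert (Hcab : forall c, a <= c <= b -> continuity_pt f c)
    by (intros c Hc'; apply Hc; unfold a in *; lra).
  destruct (continuity_ab_maj f a b Hab Hcab) as [tmax [Hmax _]].
  destruct (continuity_ab_min f a b Hab Hcab) as [tmin [Hmin _]].
  exists (Rabs (f t0) + 1 + Rabs (f tmax) + Rabs (f tmin)).
  intros t Ht.
  pose proof (Rabs_pos (f tmax)); pose proof (Rabs_pos (f tmin)).
  destruct (Rlt_le_dec t a) as [Hta|Hta].
  - assert (Hclose : Rabs (f t - f t0) < 1).
    { apply Hnear; simpl; unfold R_dist.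
      split; [lra|]. rewrite Rabs_right; unfold a in *; lra. }
    pose proof (Rabs_triang_inv (f t) (f t0)). lra.
  - assert (HTb : T <= b) by apply Rmax_l.
    specialize (Hmax t ltac:(lra)); specialize (Hmin t ltac:(lra)).
    pose proof (Rle_abs (f tmax)); pose proof (Rle_abs (- f tmin)).
    rewrite Rabs_Ropp in *. pose proof (Rabs_pos (f t0)).
    apply Rabs_le; lra.
Qed.

Lemma derivable_pt_lim_continuity_pt (f : R -> R) (x l : R) :
  derivable_pt_lim f x l -> continuity_pt f x.
Proof. intro Hf. apply derivable_continuous_pt. exists l. exact Hf. Qed.

Lemma derivable_pt_lim_eq (f : R -> R) (x l l' : R) :
  derivable_pt_lim f x l -> l = l' -> derivable_pt_lim f x l'.
Proof. intros Hf <-. exact Hf. Qed.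

Ltac derive_arith :=
  repeat first
    [ apply derivable_pt_lim_const | apply derivable_pt_lim_minus
    | apply derivable_pt_lim_plus | apply derivable_pt_lim_mult
    | apply derivable_pt_lim_id | eassumption ].

Definition negsq (x : R) : R := Rmin x 0 * Rmin x 0.

Lemma negsq_nonneg (x : R) : 0 <= negsq x.
Proof. unfold negsq. nra. Qed.

Lemma negsq_eq0 (x : R) : negsq x = 0 <-> 0 <= x.
Proof. unfold negsq, Rmin. destruct (Rle_dec x 0); split; intros; nra. Qed.

Lemma negsq_taylor (x h : R) :
  Rabs (negsq (x + h) - negsq x - 2 * Rmin x 0 * h) <= h * h.
Proof.
  unfold negsq, Rmin.
  destruct (Rle_dec x 0), (Rle_dec (x + h) 0); apply Rabs_le; split; nra.
Qed.

Lemma negsq_derivable (x : R) : derivable_pt_lim negsq x (2 * Rmin x 0).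
Proof.
  intros eps Heps. exists (mkposreal eps Heps). intros h Hh Hsmall; simpl in Hsmall.
  assert (Habs : 0 < Rabs h) by (apply Rabs_pos_lt; exact Hh).
  assert (Hsq : h * h = Rabs h * Rabs h)
    by (rewrite <- Rabs_mult; symmetry; apply Rabs_right; nra).
  replace ((negsq (x + h) - negsq x) / h - 2 * Rmin x 0)
    with ((negsq (x + h) - negsq x - 2 * Rmin x 0 * h) / h) by (field; exact Hh).
  unfold Rdiv; rewrite Rabs_mult, Rabs_inv.
  apply Rle_lt_trans with (Rabs h * Rabs h * / Rabs h).
  - apply Rmult_le_compat_r; [left; apply Rinv_0_lt_compat; exact Habs|].
    rewrite <- Hsq. apply negsq_taylor.
  - rewrite Rmult_assoc, Rinv_r, Rmult_1_r by lra. exact Hsmall.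
Qed.

Lemma exp_weighted_antitone (psi Dpsi : R -> R) (t0 T K s : R) :
  (forall t, t0 < t <= T -> derivable_pt_lim psi t (Dpsi t)) ->
  (forall t, t0 < t <= T -> Dpsi t <= K * psi t) ->
  t0 < s <= T -> psi T * exp (- K * T) <= psi s * exp (- K * s).
Proof.
  intros Hd Hle Hs.
  destruct (Rle_lt_or_eq_dec s T (proj2 Hs)) as [HsT| ->]; [|lra].
  destruct (MVT_cor2 (fun r => psi r * exp (- K * r))
              (fun r => (Dpsi r - K * psi r) * exp (- K * r)) s T)
    as [c [Hmvt Hc]]; [exact HsT| |].
  - intros c Hc. eapply derivable_pt_lim_eq.
    + apply derivable_pt_lim_mult; [apply Hd; lra|].
      apply (derivable_pt_lim_comp (fun r => - K * r) exp); [derive_arith|].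
      apply derivable_pt_lim_exp.
    + cbv beta. ring.
  - pose proof (exp_pos (- K * c)).
    assert (Dpsi c - K * psi c <= 0) by (pose proof (Hle c ltac:(lra)); lra).
    assert ((Dpsi c - K * psi c) * exp (- K * c) <= 0) by nra.
    assert ((Dpsi c - K * psi c) * exp (- K * c) * (T - s) <= 0) by nra.
    lra.
Qed.

(* Gronwall: psi(s) exp(-K s) is nonincreasing and tends to 0 at t0+. *)
Lemma gronwall_nonpos (psi Dpsi : R -> R) (t0 T K : R) :
  0 <= K -> t0 <= T ->
  (forall t, t0 < t <= T -> derivable_pt_lim psi t (Dpsi t)) ->
  (forall t, t0 < t <= T -> Dpsi t <= K * psi t) ->
  right_continuous_at psi t0 -> psi t0 = 0 -> psi T <= 0.
Proof.
  intros HK HT Hd Hle Hrc H0.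
  destruct (Rle_or_lt (psi T) 0) as [|Hpos]; [assumption|exfalso].
  destruct (Rle_lt_or_eq_dec t0 T HT) as [HtT|<-]; [|lra].
  set (chi := fun s => psi s * exp (- K * s)).
  set (eps := chi T / exp (- K * t0)).
  assert (Hexp0 : 0 < exp (- K * t0)) by apply exp_pos.
  assert (HchiT : 0 < chi T) by (unfold chi; pose proof (exp_pos (- K * T)); nra).
  assert (Heps : eps > 0) by (unfold eps; apply Rdiv_lt_0_compat; assumption).
  destruct (Hrc eps Heps) as [delta [Hdelta Hnear]].
  set (s := t0 + Rmin delta (T - t0) / 2).
  assert (Hmin : 0 < Rmin delta (T - t0)) by (apply Rmin_pos; lra).
  pose proof (Rmin_l delta (T - t0)); pose proof (Rmin_r delta (T - t0)).
  assert (Hs : t0 < s < T) by (unfold s; lra).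
  assert (Hpsi_s : psi s < eps).
  { assert (Hclose : R_dist (psi s) (psi t0) < eps).
    { apply Hnear; simpl; unfold R_dist.
      split; [lra|]. rewrite Rabs_right; unfold s; lra. }
    unfold R_dist in Hclose. rewrite H0, Rminus_0_r in Hclose.
    pose proof (Rle_abs (psi s)). lra. }
  assert (Hexp : exp (- K * s) <= exp (- K * t0)).
  { destruct (Rle_lt_or_eq_dec (- K * s) (- K * t0) ltac:(nra)) as [Hlt|Heq].
    - left; apply exp_increasing, Hlt.
    - rewrite Heq; lra. }
  assert (HchiT_eps : chi T = eps * exp (- K * t0)) by (unfold eps; field; lra).
  assert (Hchi_s : chi s < chi T).
  { pose proof (exp_pos (- K * s)). unfold chi at 1.
    destruct (Rle_or_lt 0 (psi s)); nra. }
  pose proof (exp_weighted_antitone psi Dpsi t0 T K s Hd Hle ltac:(lra)). unfold chi in *.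
  lra.
Qed.

Lemma negsq_cooperative_bound (x y a b h K : R) :
  a <= K -> 0 <= b <= K -> 0 <= h ->
  2 * Rmin x 0 * (a * x + b * y + h) <= K * (3 * negsq x + negsq y).
Proof.
  intros Ha Hb Hh. unfold negsq, Rmin.
  assert (Hsq : forall z, 0 <= z * z) by (intro; nra).
  destruct (Rle_dec x 0) as [Hx|Hx]; [destruct (Rle_dec y 0) as [Hy|Hy]|].
  - pose proof (Rmult_le_pos (K - a) (x * x) ltac:(lra) (Hsq x)).
    pose proof (Rmult_le_pos b ((x - y) * (x - y)) ltac:(lra) (Hsq (x - y))).
    pose proof (Rmult_le_pos (K - b) (x * x + y * y) ltac:(lra)
      ltac:(pose proof (Hsq x); pose proof (Hsq y); lra)).
    assert (x * h <= 0) by nra. nra.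
  - pose proof (Rmult_le_pos (K - a) (x * x) ltac:(lra) (Hsq x)).
    apply Rnot_le_lt in Hy.
    assert (x * h <= 0) by nra. assert (x * y <= 0) by nra.
    assert (b * (x * y) <= 0) by nra.
    pose proof (Rmult_le_pos K (x * x) ltac:(lra) (Hsq x)). nra.
  - pose proof (Rmult_le_pos K (Rmin y 0 * Rmin y 0) ltac:(lra) (Hsq _)).
    unfold Rmin in *. nra.
Qed.

(* The sum of the squared negative parts of P and Q satisfies a Gronwall
   inequality and vanishes at t0. *)
Lemma cooperative_nonneg (P Q a b d e hP hQ : R -> R) (t0 : R) :
  (forall t, t0 < t -> derivable_pt_lim P t (a t * P t + b t * Q t + hP t)) ->
  (forall t, t0 < t -> derivable_pt_lim Q t (d t * Q t + e t * P t + hQ t)) ->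
  (forall t, t0 < t -> 0 <= b t /\ 0 <= e t /\ 0 <= hP t /\ 0 <= hQ t) ->
  (forall T, exists K, forall t, t0 < t <= T ->
     a t <= K /\ d t <= K /\ b t <= K /\ e t <= K) ->
  right_continuous_at P t0 -> right_continuous_at Q t0 ->
  0 <= P t0 -> 0 <= Q t0 ->
  forall t, t0 <= t -> 0 <= P t /\ 0 <= Q t.
Proof.
  intros HP HQ Hsign Hbound HrcP HrcQ HP0 HQ0 T HT.
  set (psi := fun s => negsq (P s) + negsq (Q s)).
  destruct (Hbound T) as [K HK].
  pose proof (Rmax_l 0 K); pose proof (Rmax_r 0 K).
  assert (Hpsi : psi T <= 0).
  { apply (gronwall_nonpos psi
      (fun s => 2 * Rmin (P s) 0 * (a s * P s + b s * Q s + hP s)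
              + 2 * Rmin (Q s) 0 * (d s * Q s + e s * P s + hQ s))
      t0 T (4 * Rmax 0 K)); [lra|exact HT| | | |].
    - intros s Hs. apply derivable_pt_lim_plus;
        apply (derivable_pt_lim_comp _ negsq);
        solve [apply HP; lra | apply HQ; lra | apply negsq_derivable].
    - intros s Hs.
      destruct (Hsign s ltac:(lra)) as [Hb [He [HhP HhQ]]].
      destruct (HK s Hs) as [Ha [Hd [HbK HeK]]].
      pose proof (negsq_cooperative_bound (P s) (Q s) (a s) (b s) (hP s) (Rmax 0 K)
        ltac:(lra) ltac:(lra) HhP).
      pose proof (negsq_cooperative_bound (Q s) (P s) (d s) (e s) (hQ s) (Rmax 0 K)
        ltac:(lra) ltac:(lra) HhQ).
      unfold psi. lra.
    - unfold right_continuous_at, psi, negsq.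
      apply limit_plus; apply limit_mul; apply limit1_in_Rmin0; assumption.
    - unfold psi. rewrite (proj2 (negsq_eq0 _) HP0), (proj2 (negsq_eq0 _) HQ0). ring. }
  pose proof (negsq_nonneg (P T)); pose proof (negsq_nonneg (Q T)).
  unfold psi in Hpsi. split; apply negsq_eq0; lra.
Qed.

Lemma linear_nonneg (g c h : R -> R) (t0 : R) :
  (forall t, t0 < t -> derivable_pt_lim g t (c t * g t + h t)) ->
  (forall t, t0 < t -> 0 <= h t) ->
  (forall T, exists K, forall t, t0 < t <= T -> c t <= K) ->
  right_continuous_at g t0 -> 0 <= g t0 ->
  forall t, t0 <= t -> 0 <= g t.
Proof.
  intros Hg Hh Hc Hrc Hg0 t Ht.
  refine (proj1 (cooperative_nonneg g (fun _ => 0) c (fun _ => 0) (fun _ => 0)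
    (fun _ => 0) h (fun _ => 0) t0 _ _ _ _ Hrc _ Hg0 (Rle_refl 0) t Ht)).
  - intros s Hs. eapply derivable_pt_lim_eq; [apply Hg, Hs|ring].
  - intros s _. eapply derivable_pt_lim_eq; [apply derivable_pt_lim_const|ring].
  - intros s Hs. pose proof (Hh s Hs). repeat split; lra.
  - intros T. destruct (Hc T) as [K HK]. exists (Rmax 0 K). intros s Hs.
    pose proof (HK s Hs); pose proof (Rmax_l 0 K); pose proof (Rmax_r 0 K).
    repeat split; lra.
  - exact (limit_free (fun _ => 0) _ 0 t0).
Qed.

Lemma tends_at_infty_is_lim (f : R -> R) (l : R) :
  tends_at_infty f l <-> is_lim f p_infty l.
Proof.
  change (is_lim f p_infty l) with (filterlim f (Rbar_locally p_infty) (locally l)).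
  rewrite filterlim_locally. split.
  - intros Hf eps. destruct (Hf eps (cond_pos eps)) as [T HT].
    exists T. intros t Ht. apply HT. lra.
  - intros Hf eps Heps. destruct (Hf (mkposreal eps Heps)) as [T HT].
    exists (T + 1). intros t Ht. apply (HT t). lra.
Qed.

Lemma is_lim_mult_finite (f g : R -> R) (x : Rbar) (a b : R) :
  is_lim f x a -> is_lim g x b -> is_lim (fun y => f y * g y) x (a * b).
Proof. intros Hf Hg. exact (is_lim_mult f g x a b Hf Hg I). Qed.

Ltac lim_arith :=
  repeat first
    [ apply is_lim_const | apply is_lim_minus' | apply is_lim_plus'
    | apply is_lim_mult_finite | assumption ].

Lemma deriv_nonneg_bounded_tends (f D : R -> R) (t0 B : R) :
  (forall t, t0 <= t -> derivable_pt_lim f t (D t)) ->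
  (forall t, t0 <= t -> 0 <= D t) -> (forall t, t0 <= t -> f t <= B) ->
  exists l, tends_at_infty f l.
Proof.
  intros Hd Hpos Hbound.
  assert (Hmono : forall t1 t2, t0 <= t1 <= t2 -> f t1 <= f t2).
  { intros t1 t2 Ht. destruct (Rle_lt_or_eq_dec t1 t2 (proj2 Ht)) as [Hlt|<-]; [|lra].
    destruct (MVT_cor2 f D t1 t2 Hlt) as [c [Hmvt Hc]]; [intros; apply Hd; lra|].
    pose proof (Hpos c ltac:(lra)). nra. }
  set (E := fun y => exists t, t0 <= t /\ y = f t).
  destruct (completeness E) as [l [Hub Hlub]].
  { exists B. intros y [t [Ht ->]]. auto. }
  { exists (f t0), t0. split; [lra|reflexivity]. }
  exists l. intros eps Heps.
  assert (Hnear : exists t1, t0 <= t1 /\ l - eps < f t1).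
  { apply NNPP. intro Hnone.
    assert (Hl : l <= l - eps); [|lra].
    apply Hlub. intros y [t [Ht ->]]. apply Rnot_lt_le. intro Hlt.
    apply Hnone. exists t. split; assumption. }
  destruct Hnear as [t1 [Ht1 Hf1]]. exists t1. intros t Ht.
  pose proof (Hmono t1 t ltac:(lra)).
  assert (f t <= l) by (apply Hub; exists t; split; [lra|reflexivity]).
  rewrite Rabs_left1 by lra. lra.
Qed.

Definition sign_constant_from (f : R -> R) (t0 : R) : Prop :=
  (forall t, t0 <= t -> 0 <= f t) \/ (forall t, t0 <= t -> f t <= 0).

Lemma deriv_sign_constant_tends (f D : R -> R) (t0 M : R) :
  (forall t, t0 <= t -> derivable_pt_lim f t (D t)) -> sign_constant_from D t0 ->
  (forall t, t0 <= t -> Rabs (f t) <= M) -> exists l, tends_at_infty f l.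
Proof.
  intros Hd [Hpos|Hneg] Hbound.
  - apply (deriv_nonneg_bounded_tends f D t0 M Hd Hpos).
    intros t Ht. pose proof (Hbound t Ht); pose proof (Rle_abs (f t)). lra.
  - destruct (deriv_nonneg_bounded_tends (fun t => - f t) (fun t => - D t) t0 M)
      as [l Hl].
    + intros t Ht. apply derivable_pt_lim_opp, Hd, Ht.
    + intros t Ht. pose proof (Hneg t Ht). lra.
    + intros t Ht. pose proof (Hbound t Ht); pose proof (Rle_abs (- f t)).
      rewrite Rabs_Ropp in *. lra.
    + exists (- l). rewrite tends_at_infty_is_lim in *.
      apply (is_lim_ext (fun t => - - f t)); [intros; ring|].
      exact (is_lim_opp _ _ _ Hl).
Qed.

(* A bounded function cannot have a derivative with a nonzero limit: over a
   window of length 4 (|M| + 1) / |c| it would move by more than 2 M. *)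
Lemma deriv_tends_zero (f D : R -> R) (t0 M c : R) :
  (forall t, t0 <= t -> derivable_pt_lim f t (D t)) ->
  (forall t, t0 <= t -> Rabs (f t) <= M) -> tends_at_infty D c -> c = 0.
Proof.
  intros Hd Hbound Hlim.
  destruct (Req_dec c 0) as [|Hc]; [assumption|exfalso].
  assert (Habs : 0 < Rabs c) by (apply Rabs_pos_lt; exact Hc).
  destruct (Hlim (Rabs c / 2)) as [T HT]; [lra|].
  set (a := Rmax T t0). set (L := 4 * (Rabs M + 1) / Rabs c).
  pose proof (Rmax_l T t0); pose proof (Rmax_r T t0).
  assert (HL : 0 < L) by (unfold L; pose proof (Rabs_pos M);
                          apply Rdiv_lt_0_compat; lra).
  destruct (MVT_cor2 f D a (a + L)) as [x [Hmvt Hx]];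
    [lra|intros; apply Hd; unfold a in *; lra|].
  assert (HDx : Rabs c / 2 < Rabs (D x)).
  { pose proof (HT x ltac:(unfold a in *; lra)) as Hclose.
    pose proof (Rabs_triang_inv c (c - D x)) as Htri.
    rewrite <- Rabs_Ropp in Hclose. replace (- (D x - c)) with (c - D x) in Hclose by ring.
    replace (c - (c - D x)) with (D x) in Htri by ring. lra. }
  assert (Hjump : 2 * (Rabs M + 1) < Rabs (f (a + L) - f a)).
  { rewrite Hmvt, Rabs_mult. replace (a + L - a) with L by ring.
    rewrite (Rabs_right L) by lra.
    replace (2 * (Rabs M + 1)) with (Rabs c / 2 * L) by (unfold L; field; lra).
    apply Rmult_lt_compat_r; assumption. }
  pose proof (Hbound a ltac:(unfold a; lra)).
  pose proof (Hbound (a + L) ltac:(unfold a; lra)).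
  pose proof (Rabs_triang (f (a + L)) (- f a)). rewrite Rabs_Ropp in *.
  unfold Rminus in Hjump. pose proof (Rle_abs M). lra.
Qed.

Lemma nonvanishing_sign_constant (f : R -> R) (t0 : R) :
  (forall t, t0 <= t -> continuity_pt f t) -> (forall t, t0 <= t -> f t <> 0) ->
  sign_constant_from f t0.
Proof.
  intros Hc Hnz.
  assert (Hcross : forall g, (forall t, t0 <= t -> continuity_pt g t) ->
            g t0 < 0 -> forall t, t0 <= t -> 0 < g t -> exists z, t0 <= z /\ g z = 0).
  { intros g Hg Hg0 t Ht Hgt.
    destruct (Rle_lt_or_eq_dec t0 t Ht) as [Hlt|<-]; [|lra].
    destruct (Ranalysis5.IVT_interv g t0 t) as [z [Hz Hgz]];
      [intros; apply Hg; lra|assumption|assumption|assumption|].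
    exists z. split; [lra|assumption]. }
  destruct (Rlt_or_le 0 (f t0)) as [Hpos|Hneg].
  - left. intros t Ht. destruct (Rle_or_lt 0 (f t)) as [|Hft]; [assumption|exfalso].
    destruct (Hcross (fun s => - f s)) with t as [z [Hz Hfz]];
      [intros; apply continuity_pt_opp, Hc; assumption|lra|assumption|lra|].
    apply (Hnz z Hz). lra.
  - right. intros t Ht. destruct (Rle_or_lt (f t) 0) as [|Hft]; [assumption|exfalso].
    destruct (Hcross f Hc) with t as [z [Hz Hfz]];
      [pose proof (Hnz t0 (Rle_refl t0)); lra|assumption|assumption|].
    exact (Hnz z Hz Hfz).
Qed.

Lemma eventually_sign_constant (u v : R -> R) :
  (forall t, 0 < t -> continuity_pt u t) ->
  (forall t0, 0 < t0 -> 0 <= u t0 -> v t0 <= 0 ->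
     forall t, t0 <= t -> 0 <= u t /\ v t <= 0) ->
  (forall t0, 0 < t0 -> u t0 <= 0 -> 0 <= v t0 ->
     forall t, t0 <= t -> u t <= 0 /\ 0 <= v t) ->
  exists t0, 0 < t0 /\ sign_constant_from u t0 /\ sign_constant_from v t0.
Proof.
  intros Hc Hinv1 Hinv2.
  destruct (classic (exists t0, 0 < t0 /\
             ((0 <= u t0 /\ v t0 <= 0) \/ (u t0 <= 0 /\ 0 <= v t0))))
    as [[t0 [Ht0 [[Hu Hv]|[Hu Hv]]]]|Hnever].
  - exists t0. split; [exact Ht0|].
    split; [left|right]; intros t Ht; apply (Hinv1 t0 Ht0 Hu Hv t Ht).
  - exists t0. split; [exact Ht0|].
    split; [right|left]; intros t Ht; apply (Hinv2 t0 Ht0 Hu Hv t Ht).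
  - assert (Hsame : forall t, 0 < t -> (0 < u t /\ 0 < v t) \/ (u t < 0 /\ v t < 0)).
    { intros t Ht. destruct (Rlt_or_le 0 (u t)) as [Hu|Hu].
      - left. split; [exact Hu|]. apply Rnot_le_lt. intro Hv.
        apply Hnever. exists t. split; [exact Ht|left; lra].
      - right. destruct (Rle_or_lt 0 (v t)) as [Hv|Hv].
        + exfalso. apply Hnever. exists t. split; [exact Ht|right; lra].
        + split; [|exact Hv]. apply Rnot_le_lt. intro Hu'.
          apply Hnever. exists t. split; [exact Ht|left; lra]. }
    exists 1. split; [lra|].
    assert (Hu1 : sign_constant_from u 1).
    { apply nonvanishing_sign_constant; [intros; apply Hc; lra|].
      intros t Ht. destruct (Hsame t ltac:(lra)); lra. }
    destruct Hu1 as [Hpos|Hneg]; split.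
    + left; exact Hpos.
    + left. intros t Ht. pose proof (Hpos t Ht). destruct (Hsame t ltac:(lra)); lra.
    + right; exact Hneg.
    + right. intros t Ht. pose proof (Hneg t Ht). destruct (Hsame t ltac:(lra)); lra.
Qed.

Section Contagion.

Variables beta mu p : R.
Hypotheses (Hbeta : beta > 0) (Hmu : mu > 0) (Hp : 0 < p < 1).
Variables S0 S1 A : R -> R.
Hypothesis Hsol : is_solution beta mu p S0 S1 A.
Hypothesis Hinit : in_simplex (S0 0) (S1 0) (A 0).

Lemma S0_derivable (t : R) :
  0 < t -> derivable_pt_lim S0 t (f_S0 beta mu p (S0 t) (S1 t) (A t)).
Proof. intro Ht. apply (proj1 Hsol t Ht). Qed.

Lemma S1_derivable (t : R) :
  0 < t -> derivable_pt_lim S1 t (f_S1 beta mu p (S0 t) (S1 t) (A t)).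
Proof. intro Ht. apply (proj1 Hsol t Ht). Qed.

Lemma A_derivable (t : R) :
  0 < t -> derivable_pt_lim A t (f_A beta mu p (S0 t) (S1 t) (A t)).
Proof. intro Ht. apply (proj1 Hsol t Ht). Qed.

Lemma total_population (t : R) : 0 <= t -> S0 t + S1 t + A t = 1.
Proof.
  intro Ht. destruct Hsol as [_ [HS0 [HS1 HA]]]. destruct Hinit as [_ [_ [_ Hsum]]].
  set (N := fun s => S0 s + S1 s + A s).
  assert (HN : forall s, 0 < s -> derivable_pt_lim N s (- mu * (N s - 1))).
  { intros s Hs. pose proof (S0_derivable s Hs); pose proof (S1_derivable s Hs);
      pose proof (A_derivable s Hs).
    eapply derivable_pt_lim_eq; [unfold N; derive_arith|].
    cbv beta. unfold N, f_S0, f_S1, f_A. ring. }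
  assert (HrcN : right_continuous_at N 0).
  { unfold right_continuous_at, N.
    apply limit_plus; [apply limit_plus|]; apply right_cont_at0_right_continuous; assumption. }
  (* N - 1 and 1 - N both solve x' = - mu x from 0. *)
  destruct (cooperative_nonneg (fun s => N s - 1) (fun s => 1 - N s)
    (fun _ => - mu) (fun _ => 0) (fun _ => - mu) (fun _ => 0) (fun _ => 0) (fun _ => 0) 0)
    with t as [Hge Hle].
  - intros s Hs. eapply derivable_pt_lim_eq.
    + apply derivable_pt_lim_minus; [apply HN, Hs|apply derivable_pt_lim_const].
    + ring.
  - intros s Hs. eapply derivable_pt_lim_eq.
    + apply derivable_pt_lim_minus; [apply derivable_pt_lim_const|apply HN, Hs].
    + ring.
  - intros s _. lra.
  - intros T. exists 0. intros s _. lra.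
  - apply limit_minus; [exact HrcN|exact (limit_free (fun _ => 1) _ 0 0)].
  - apply limit_minus; [exact (limit_free (fun _ => 1) _ 0 0)|exact HrcN].
  - unfold N. lra.
  - unfold N. lra.
  - exact Ht.
  - unfold N in *. lra.
Qed.

Lemma A_nonneg (t : R) : 0 <= t -> 0 <= A t.
Proof.
  destruct Hsol as [_ [HS0 [HS1 HA]]]. destruct Hinit as [_ [_ [HA0 _]]].
  apply (linear_nonneg A (fun s => beta * (p * S0 s + S1 s) - mu) (fun _ => 0) 0).
  - intros s Hs. eapply derivable_pt_lim_eq; [apply A_derivable, Hs|].
    unfold f_A. ring.
  - intros s _. lra.
  - intros T.
    destruct (right_continuous_bounded S0 0 T) as [M0 HM0];
      [apply right_cont_at0_right_continuous, HS0
      |intros s Hs; exact (derivable_pt_lim_continuity_pt _ _ _ (S0_derivable s Hs))|].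
    destruct (right_continuous_bounded S1 0 T) as [M1 HM1];
      [apply right_cont_at0_right_continuous, HS1
      |intros s Hs; exact (derivable_pt_lim_continuity_pt _ _ _ (S1_derivable s Hs))|].
    exists (beta * (M0 + M1)). intros s Hs.
    pose proof (HM0 s ltac:(lra)); pose proof (HM1 s ltac:(lra)).
    pose proof (Rle_abs (S0 s)); pose proof (Rle_abs (- S0 s)); pose proof (Rle_abs (S1 s)).
    rewrite Rabs_Ropp in *.
    assert (p * S0 s <= M0) by nra. nra.
  - apply right_cont_at0_right_continuous, HA.
  - exact HA0.
Qed.

Lemma S0_nonneg (t : R) : 0 <= t -> 0 <= S0 t.
Proof.
  destruct Hsol as [_ [HS0 _]]. destruct Hinit as [HS00 _].
  apply (linear_nonneg S0 (fun s => - (beta * A s + mu)) (fun _ => mu) 0).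
  - intros s Hs. eapply derivable_pt_lim_eq; [apply S0_derivable, Hs|].
    unfold f_S0. ring.
  - intros s _. lra.
  - intros T. exists 0. intros s Hs. pose proof (A_nonneg s ltac:(lra)). nra.
  - apply right_cont_at0_right_continuous, HS0.
  - exact HS00.
Qed.

Lemma S1_nonneg (t : R) : 0 <= t -> 0 <= S1 t.
Proof.
  destruct Hsol as [_ [_ [HS1 _]]]. destruct Hinit as [_ [HS10 _]].
  apply (linear_nonneg S1 (fun s => - (beta * A s + mu))
           (fun s => (1 - p) * beta * S0 s * A s) 0).
  - intros s Hs. eapply derivable_pt_lim_eq; [apply S1_derivable, Hs|].
    unfold f_S1. ring.
  - intros s Hs. pose proof (S0_nonneg s ltac:(lra)); pose proof (A_nonneg s ltac:(lra)).
    apply Rmult_le_pos; [apply Rmult_le_pos; [apply Rmult_le_pos|]|]; lra.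
  - intros T. exists 0. intros s Hs. pose proof (A_nonneg s ltac:(lra)). nra.
  - apply right_cont_at0_right_continuous, HS1.
  - exact HS10.
Qed.

Lemma solution_in_simplex (t : R) : 0 <= t -> in_simplex (S0 t) (S1 t) (A t).
Proof.
  intro Ht. repeat split;
    auto using S0_nonneg, S1_nonneg, A_nonneg, total_population.
Qed.

Let u (t : R) : R := f_S0 beta mu p (S0 t) (S1 t) (A t).
Let v (t : R) : R := f_A beta mu p (S0 t) (S1 t) (A t).

Lemma u_derivable (t : R) :
  0 < t -> derivable_pt_lim u t (- (beta * A t + mu) * u t - beta * S0 t * v t).
Proof.
  intro Ht. pose proof (S0_derivable t Ht); pose proof (S1_derivable t Ht);
    pose proof (A_derivable t Ht).
  eapply derivable_pt_lim_eq; [unfold u, f_S0; derive_arith|].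
  cbv beta. unfold u, v, f_S0, f_A. ring.
Qed.

Lemma v_derivable (t : R) :
  0 < t -> derivable_pt_lim v t
    ((beta * (p * S0 t + S1 t) - mu - beta * A t) * v t - beta * (1 - p) * A t * u t).
Proof.
  intro Ht. pose proof (S0_derivable t Ht); pose proof (S1_derivable t Ht);
    pose proof (A_derivable t Ht).
  eapply derivable_pt_lim_eq; [unfold v, f_A; derive_arith|].
  unfold u, v, f_S0, f_S1, f_A; cbv beta.
  replace (S1 t) with (1 - S0 t - A t) by (pose proof (total_population t ltac:(lra)); lra).
  ring.
Qed.

Lemma scaled_velocities_nonneg (sigma t0 : R) :
  0 < t0 -> 0 <= sigma * u t0 -> 0 <= - sigma * v t0 ->
  forall t, t0 <= t -> 0 <= sigma * u t /\ 0 <= - sigma * v t.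
Proof.
  intros Ht0 Hu0 Hv0.
  apply (cooperative_nonneg (fun s => sigma * u s) (fun s => - sigma * v s)
    (fun s => - (beta * A s + mu)) (fun s => beta * S0 s)
    (fun s => beta * (p * S0 s + S1 s) - mu - beta * A s) (fun s => beta * (1 - p) * A s)
    (fun _ => 0) (fun _ => 0) t0); try assumption.
  - intros s Hs. eapply derivable_pt_lim_eq.
    + apply derivable_pt_lim_mult; [apply derivable_pt_lim_const|apply u_derivable; lra].
    + cbv beta. ring.
  - intros s Hs. eapply derivable_pt_lim_eq.
    + apply derivable_pt_lim_mult; [apply derivable_pt_lim_const|apply v_derivable; lra].
    + cbv beta. ring.
  - intros s Hs. destruct (solution_in_simplex s ltac:(lra)) as [H0 [H1 [HA _]]].
    repeat split; try lra; apply Rmult_le_pos; try apply Rmult_le_pos; lra.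
  - intros T. exists beta. intros s Hs.
    destruct (solution_in_simplex s ltac:(lra)) as [H0 [H1 [HA Hsum]]].
    assert (0 <= beta * A s) by nra.
    assert (p * S0 s + S1 s <= 1) by nra.
    assert ((1 - p) * A s <= 1) by nra.
    cbv beta. repeat split; nra.
  - apply continuity_pt_right_continuous, continuity_pt_scal.
    exact (derivable_pt_lim_continuity_pt _ _ _ (u_derivable t0 Ht0)).
  - apply continuity_pt_right_continuous, continuity_pt_scal.
    exact (derivable_pt_lim_continuity_pt _ _ _ (v_derivable t0 Ht0)).
Qed.

Lemma solution_bounded (t : R) :
  0 <= t -> Rabs (S0 t) <= 1 /\ Rabs (S1 t) <= 1 /\ Rabs (A t) <= 1.
Proof.
  intro Ht. destruct (solution_in_simplex t Ht) as [H0 [H1 [HA Hsum]]].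
  repeat split; apply Rabs_le; lra.
Qed.

Lemma solution_tends :
  exists e0 e1 ea, e0 + e1 + ea = 1 /\
    tends_at_infty S0 e0 /\ tends_at_infty S1 e1 /\ tends_at_infty A ea.
Proof.
  destruct (eventually_sign_constant u v) as [t0 [Ht0 [Hu Hv]]].
  - intros t Ht. exact (derivable_pt_lim_continuity_pt _ _ _ (u_derivable t Ht)).
  - intros t0 Ht0 Hu0 Hv0 t Ht.
    pose proof (scaled_velocities_nonneg 1 t0 Ht0 ltac:(lra) ltac:(lra) t Ht). lra.
  - intros t0 Ht0 Hu0 Hv0 t Ht.
    pose proof (scaled_velocities_nonneg (-1) t0 Ht0 ltac:(lra) ltac:(lra) t Ht). lra.
  - destruct (deriv_sign_constant_tends S0 u t0 1) as [e0 He0];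
      [intros t Ht; apply S0_derivable; lra|exact Hu|
       intros t Ht; apply solution_bounded; lra|].
    destruct (deriv_sign_constant_tends A v t0 1) as [ea Hea];
      [intros t Ht; apply A_derivable; lra|exact Hv|
       intros t Ht; apply solution_bounded; lra|].
    exists e0, (1 - e0 - ea), ea. repeat split; [ring|exact He0| |exact Hea].
    rewrite tends_at_infty_is_lim in *.
    apply (is_lim_ext_loc (fun t => 1 - S0 t - A t)).
    + exists 0. intros t Ht. pose proof (total_population t ltac:(lra)). lra.
    + lim_arith.
Qed.

Lemma limit_is_equilibrium (e0 e1 ea : R) :
  e0 + e1 + ea = 1 -> tends_at_infty S0 e0 -> tends_at_infty S1 e1 ->
  tends_at_infty A ea -> is_equilibrium beta mu p e0 e1 ea.
Proof.
  intros Hsum H0 H1 HA.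
  assert (Hu : tends_at_infty u (f_S0 beta mu p e0 e1 ea)).
  { rewrite tends_at_infty_is_lim in *. unfold u, f_S0. lim_arith. }
  assert (Hv : tends_at_infty v (f_A beta mu p e0 e1 ea)).
  { rewrite tends_at_infty_is_lim in *. unfold v, f_A. lim_arith. }
  assert (Hu0 : f_S0 beta mu p e0 e1 ea = 0).
  { apply (deriv_tends_zero S0 u 1 1); [|intros t Ht; apply solution_bounded; lra|exact Hu].
    intros t Ht. apply S0_derivable. lra. }
  assert (Hv0 : f_A beta mu p e0 e1 ea = 0).
  { apply (deriv_tends_zero A v 1 1); [|intros t Ht; apply solution_bounded; lra|exact Hv].
    intros t Ht. apply A_derivable. lra. }
  assert (Hsum_field : f_S1 beta mu p e0 e1 ea
            = mu * (1 - (e0 + e1 + ea)) - f_S0 beta mu p e0 e1 ea - f_A beta mu p e0 e1 ea)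
    by (unfold f_S0, f_S1, f_A; ring).
  split; [exact Hu0|split; [|exact Hv0]].
  rewrite Hsum_field, Hsum, Hu0, Hv0. ring.
Qed.

End Contagion.

Theorem proposition1 (beta mu p : R) (S0 S1 A : R -> R) :
  beta > 0 -> mu > 0 -> 0 < p < 1 ->
  is_solution beta mu p S0 S1 A ->
  in_simplex (S0 0) (S1 0) (A 0) ->
  exists e0 e1 ea : R,
    is_equilibrium beta mu p e0 e1 ea /\
    tends_at_infty S0 e0 /\ tends_at_infty S1 e1 /\ tends_at_infty A ea.
Proof.
  intros Hbeta Hmu Hp Hsol Hinit.
  destruct (solution_tends beta mu p Hbeta Hmu Hp S0 S1 A Hsol Hinit)
    as [e0 [e1 [ea [Hsum [H0 [H1 HA]]]]]].
  exists e0, e1, ea. split; [|auto].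
  exact (limit_is_equilibrium beta mu p Hbeta Hmu Hp S0 S1 A Hsol Hinit e0 e1 ea Hsum H0 H1 HA).
Qed.
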